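(* Let $\epsilon>0$, $q>0$, and let $\Lambda_\epsilon$ be an $\epsilon$-lattice under the $\ell_2$ norm. For any $\boldsymbol\lambda\in\Lambda_\epsilon$, the expanded Voronoi region $\mathbf{Vor}^+(\boldsymbol\lambda)$ has volume at most $(1+2q)^d\,\mathbf{V}$.
   Context: A lattice is the set of integer combinations of a basis of $\mathbb{R}^d$. Under $\ell_2$, its packing radius $r_p$ is the supremum of $r$ such that balls of radius $r$ around distinct lattice points are disjoint and its cover radius $r_c$ is the infimum of $r$ such that balls of radius $r$ around lattice points cover $\mathbb{R}^d$; an $\epsilon$-lattice has $\epsilon=r_p\le r_c\le3\epsilon$. The Voronoi region of $\boldsymbol\lambda$ is $\mathbf{Vor}(\boldsymbol\lambda)=\{\mathbf{x}\in\mathbb{R}^d:\|\mathbf{x}-\boldsymbol\lambda\|_2<\|\mathbf{x}-\boldsymbol\lambda'\|_2\ \forall\boldsymbol\lambda'\in\Lambda_\epsilon\setminus\{\boldsymbol\lambda\}\}$; all Voronoi regions have a common volume $\mathbf{V}$. The expanded Voronoi region $\mathbf{Vor}^+(\boldsymbol\lambda)$ is the set of points within $\ell_2$ distance $2q\epsilon$ of $\mathbf{Vor}(\boldsymbol\lambda)$. *)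

From HB Require Import structures.
From mathcomp Require Import all_boot all_order all_algebra.
From mathcomp Require Import all_classical all_reals all_analysis.
Set Implicit Arguments. Unset Strict Implicit. Unset Printing Implicit Defensive.
Import Order.TTheory GRing.Theory Num.Theory.
Local Open Scope classical_set_scope.
Local Open Scope ring_scope.

Section Defs.
Variables (R : realType) (d : nat).

Definition l2norm (x : 'rV[R]_d) : R := Num.sqrt (\sum_(i < d) x ord0 i ^+ 2).

Definition lattice (B : 'M[R]_d) : set 'rV[R]_d :=
  [set map_mx (fun z : int => z%:~R) z *m B | z in [set: 'rV[int]_d]].

Definition packing_radius (L : set 'rV[R]_d) : R :=
  sup [set r : R | 0 <= r /\ forall l l', L l -> L l' -> l <> l' ->
        forall x, ~ (l2norm (x - l) < r /\ l2norm (x - l') < r)].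

Definition cover_radius (L : set 'rV[R]_d) : R :=
  inf [set r : R | 0 <= r /\ forall x, exists2 l, L l & l2norm (x - l) <= r].

Definition eps_lattice (eps : R) (L : set 'rV[R]_d) : Prop :=
  eps = packing_radius L /\ packing_radius L <= cover_radius L /\
  cover_radius L <= 3 * eps.

Definition Vor (L : set 'rV[R]_d) (l : 'rV[R]_d) : set 'rV[R]_d :=
  [set x | forall l', L l' -> l' <> l -> l2norm (x - l) < l2norm (x - l')].

Definition Vor_plus (L : set 'rV[R]_d) (rho : R) (l : 'rV[R]_d) : set 'rV[R]_d :=
  [set x | exists2 y, Vor L l y & l2norm (x - y) <= rho].

(* d-dimensional Lebesgue (outer) measure via countable covers by
   half-open boxes [a, b) *)
Definition box (a b : 'rV[R]_d) : set 'rV[R]_d :=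
  [set x | forall i, a ord0 i <= x ord0 i < b ord0 i].

Definition box_vol (a b : 'rV[R]_d) : R :=
  \prod_(i < d) Num.max (b ord0 i - a ord0 i) 0.

Definition lebesgue_vol (A : set 'rV[R]_d) : \bar R :=
  ereal_inf [set s : \bar R | exists a b : nat -> 'rV[R]_d,
    A `<=` \bigcup_k box (a k) (b k) /\
    s = (\sum_(0 <= k <oo) (box_vol (a k) (b k))%:E)%E].
End Defs.

(* A point x of Vor+(l) is within 2 q eps of some y in Vor(l).  A lattice
   vector a = l' - l != 0 has length at least 2 eps, so the component of
   x - y along a is at most q |a|^2; hence the homothety of centre l and ratio
   1/(1 + 2q) maps x into Vor(l), whose membership test is the half-space
   condition 2 <z - l, a> < |a|^2.  Thus Vor+(l) lies in the image of Vor(l)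
   under the homothety of ratio 1 + 2q, which scales every box cover, hence
   the volume, by (1 + 2q)^d. *)
From HB Require Import structures.
From mathcomp Require Import all_boot all_order all_algebra.
From mathcomp Require Import all_classical all_reals all_analysis.
From mathcomp Require Import ring lra.
Import Order.TTheory GRing.Theory Num.Theory.
Local Open Scope classical_set_scope.
Local Open Scope ring_scope.

Set Implicit Arguments. Unset Strict Implicit. Unset Printing Implicit Defensive.

Section Euclidean.
Variables (R : realType) (d : nat).
Implicit Types (u v w : 'rV[R]_d) (L : set 'rV[R]_d).

Definition dot u v : R := \sum_(i < d) u ord0 i * v ord0 i.

Lemma dotC u v : dot u v = dot v u.
Proof. by apply: eq_bigr => i _; rewrite mulrC. Qed.

Lemma dotDl u v w : dot (u + v) w = dot u w + dot v w.
Proof. by rewrite /dot -big_split; apply: eq_bigr => i _; rewrite !mxE mulrDl. Qed.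

Lemma dotZl a u v : dot (a *: u) v = a * dot u v.
Proof. by rewrite /dot mulr_sumr; apply: eq_bigr => i _; rewrite !mxE mulrA. Qed.

Lemma dotZr a u v : dot u (a *: v) = a * dot u v.
Proof. by rewrite dotC dotZl dotC. Qed.

Lemma dotBl u v w : dot (u - v) w = dot u w - dot v w.
Proof. by rewrite dotDl -scaleN1r dotZl mulN1r. Qed.

Lemma dotBr u v w : dot u (v - w) = dot u v - dot u w.
Proof. by rewrite dotC dotBl ![dot _ u]dotC. Qed.

Lemma dotBB u v : dot (u - v) (u - v) = dot u u - 2 * dot u v + dot v v.
Proof. by rewrite dotBl !dotBr (dotC v u); ring. Qed.

Lemma dot_ge0 u : 0 <= dot u u.
Proof. by apply: sumr_ge0 => i _; rewrite -expr2 sqr_ge0. Qed.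

Lemma l2normE u : l2norm u = Num.sqrt (dot u u).
Proof. by congr Num.sqrt; apply: eq_bigr => i _; rewrite expr2. Qed.

Lemma l2norm_ge0 u : 0 <= l2norm u.
Proof. by rewrite l2normE sqrtr_ge0. Qed.

Lemma sqr_l2norm u : l2norm u ^+ 2 = dot u u.
Proof. by rewrite l2normE sqr_sqrtr ?dot_ge0. Qed.

Lemma l2normZ a u : l2norm (a *: u) = `|a| * l2norm u.
Proof. by rewrite !l2normE dotZl dotZr mulrA -expr2 sqrtrM ?sqr_ge0 // sqrtr_sqr. Qed.

Lemma l2norm_lt u v : (l2norm u < l2norm v) = (dot u u < dot v v).
Proof. by rewrite !l2normE !ltNge ler_sqrt ?dot_ge0. Qed.

(* Expanding 0 <= |w - c a|^2 replaces the Cauchy-Schwarz inequality. *)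
Lemma dot_le_of_sqr_le c w a :
  0 < c -> dot w w <= c ^+ 2 * dot a a -> dot w a <= c * dot a a.
Proof.
move=> c_gt0 ww_le.
have := dot_ge0 (w - c *: a); rewrite dotBB dotZl !dotZr => sq_ge0.
have twoc_gt0 : 0 < 2 * c by rewrite mulr_gt0.
rewrite -(ler_pM2l twoc_gt0); nra.
Qed.

Lemma l2norm_ltB_dot x l l' : (l2norm (x - l) < l2norm (x - l')) =
  (2 * dot (x - l) (l' - l) < dot (l' - l) (l' - l)).
Proof.
have -> : x - l' = (x - l) - (l' - l) by rewrite opprB addrA subrK.
by rewrite l2norm_lt (dotBB (x - l)) -subr_gt0 -[RHS]subr_gt0; congr (0 < _); ring.
Qed.

Lemma packing_radius_sep L l l' : 0 < packing_radius L ->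
  L l -> L l' -> l <> l' -> 2 * packing_radius L <= l2norm (l' - l).
Proof.
move=> pack_gt0 Ll Ll' l_neq; set n := l2norm (l' - l).
rewrite leNgt; apply/negP => close.
set S := [set r : R | 0 <= r /\ forall l l', L l -> L l' -> l <> l' ->
        forall x, ~ (l2norm (x - l) < r /\ l2norm (x - l') < r)].
have supS : has_sup S.
  by apply: contrapT => /sup_out supS; move: pack_gt0; rewrite /packing_radius -/S supS ltxx.
have [|r [_ Sr] r_gt] := @sup_adherent _ S (packing_radius L - n / 2) _ supS.
  by rewrite subr_gt0; lra.
apply: (Sr l l' Ll Ll' l_neq (l + 2^-1 *: (l' - l))).
have -> : l + 2^-1 *: (l' - l) - l = 2^-1 *: (l' - l) by rewrite addrC addKr.
have -> : l + 2^-1 *: (l' - l) - l' = - 2^-1 *: (l' - l).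
  by apply/matrixP => i j; rewrite !mxE; field.
rewrite -[sup S]/(packing_radius L) in r_gt.
by rewrite !l2normZ normrN -/n ger0_norm ?invr_ge0 //; split; lra.
Qed.

End Euclidean.

Section Homothety.
Variables (R : realType) (d : nat).
Implicit Types (L : set 'rV[R]_d).

Definition homothety (c : R) l x : 'rV[R]_d := l + c *: (x - l).

Lemma homothetyK c l : c != 0 -> cancel (homothety c^-1 l) (homothety c l).
Proof.
by move=> c_neq0 x; rewrite /homothety [l + _ - l]addrC addKr scalerA mulfV // scale1r addrC subrK.
Qed.

Lemma box_vol_ge0 (a b : 'rV[R]_d) : 0 <= box_vol a b.
Proof. by apply: prodr_ge0 => i _; rewrite le_max lexx orbT. Qed.

Lemma box_vol_homothety c l a b : 0 < c ->
  box_vol (homothety c l a) (homothety c l b) = c ^+ d * box_vol a b.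
Proof.
move=> c_gt0; rewrite /box_vol -[in c ^+ d](card_ord d) -prodr_const -big_split.
apply: eq_bigr => i _ /=; rewrite !mxE.
have -> : l ord0 i + c * (b ord0 i - l ord0 i) - (l ord0 i + c * (a ord0 i - l ord0 i))
  = c * (b ord0 i - a ord0 i) by ring.
by rewrite -[X in Num.max _ X](mulr0 c) -maxr_pMr // ltW.
Qed.

Lemma box_homothety c l a b x : 0 < c ->
  box a b x -> box (homothety c l a) (homothety c l b) (homothety c l x).
Proof.
move=> c_gt0 x_in i; have /andP[ax xb] := x_in i.
by rewrite !mxE lerD2l ltrD2l ler_pM2l // ltr_pM2l // lerD2r ltrD2r ax xb.
Qed.

Lemma lebesgue_vol_homothety c l (A A' : set 'rV[R]_d) : 0 < c ->
  (forall x, A' x -> A (homothety c^-1 l x)) ->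
  (lebesgue_vol A' <= (c ^+ d)%:E * lebesgue_vol A)%E.
Proof.
move=> c_gt0 A'_sub; have cd_gt0 : 0 < c ^+ d by rewrite exprn_gt0.
rewrite -lee_pdivrMl //; apply: le_ereal_inf_tmp => _ [a [b [cover ->]]].
rewrite lee_pdivrMl //; apply: ereal_inf_lbound.
exists (fun k => homothety c l (a k)), (fun k => homothety c l (b k)); split.
  move=> x /A'_sub /cover [k _ box_k]; exists k => //.
  by rewrite -[x](homothetyK l (lt0r_neq0 c_gt0)); apply: box_homothety.
rewrite -nneseriesZl; last by move=> k _; rewrite lee_fin box_vol_ge0.
by apply: eq_eseriesr => k _; rewrite -EFinM box_vol_homothety.
Qed.

Lemma Vor_plus_sub_homothety L l eps q : 0 < q ->
  (forall l', L l' -> l' <> l -> 2 * eps <= l2norm (l' - l)) ->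
  forall x, Vor_plus L (2 * q * eps) l x ->
  Vor L l (homothety (1 + 2 * q)^-1 l x).
Proof.
move=> q_gt0 sep x [y Vor_y xy_le] l' Ll' l'_neq; rewrite l2norm_ltB_dot.
set a := l' - l; have a_ge : 2 * eps <= l2norm a := sep l' Ll' l'_neq.
have y_in : 2 * dot (y - l) a < dot a a by rewrite -l2norm_ltB_dot; apply: Vor_y.
have xy_along : dot (x - y) a <= q * dot a a.
  apply: dot_le_of_sqr_le => //; rewrite -!sqr_l2norm -exprMn.
  rewrite ler_pXn2r ?nnegrE ?mulr_ge0 ?l2norm_ge0 ?(ltW q_gt0) //.
  by apply: (le_trans xy_le); nra.
have -> : homothety (1 + 2 * q)^-1 l x - l = (1 + 2 * q)^-1 *: ((y - l) + (x - y)).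
  by rewrite /homothety [l + _ - l]addrC addKr [y - l + _]addrC addrA subrK.
rewrite dotZl dotDl mulrCA ltr_pdivrMl; lra.
Qed.

End Homothety.

Theorem lemma30 (R : realType) (d : nat) (B : 'M[R]_d) (eps q : R) :
  B \in unitmx -> 0 < eps -> 0 < q ->
  eps_lattice eps (lattice B) ->
  forall l : 'rV[R]_d, lattice B l ->
  (lebesgue_vol (Vor_plus (lattice B) (2 * q * eps) l)
     <= ((1 + 2 * q) ^+ d)%:E * lebesgue_vol (Vor (lattice B) l))%E.
Proof.
move=> _ eps_gt0 q_gt0 [epsE _] l Ll.
apply: (lebesgue_vol_homothety (l := l)); first lra.
apply: Vor_plus_sub_homothety => // l' Ll' l'_neq.
by rewrite epsE; apply: packing_radius_sep Ll Ll' (nesym l'_neq); rewrite -epsE.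
Qed.
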